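(* Let $f\in\mathcal{K}$ have radius of convergence $R>0$, Khinchin family $(X_t)$ and fulcrum $F$. For every integer $n\ge3$, $$\limsup_{s\uparrow\ln R}\frac{|F^{(j)}(s)|}{F''(s)^{j/2}}<+\infty\quad\text{for every }3\le j\le n$$ if and only if $$\limsup_{t\uparrow R}|\mathbf{E}(\breve{X}_t^k)|<+\infty\quad\text{for every }3\le k\le n.$$
   Context: The class $\mathcal{K}$ consists of non-constant power series $f(z)=\sum_{n\ge0}a_nz^n$ with radius of convergence $R\in(0,+\infty]$, with $a_n\ge 0$ for all $n$ and $a_0>0$. For $t\in(0,R)$, $X_t$ is the random variable with $\mathbf{P}(X_t=n)=a_nt^n/f(t)$, $n\ge0$. Write $m_f(t)=\mathbf{E}(X_t)$, $\sigma_f^2(t)=\mathbf{V}(X_t)>0$ and $\breve{X}_t=(X_t-m_f(t))/\sigma_f(t)$. The fulcrum of $f$ is $F(s)=\ln f(e^s)$ for real $s<\ln R$ (with $\ln R=+\infty$ if $R=+\infty$); $F''(s)=\sigma_f^2(e^s)$. *)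

From Stdlib Require Import Reals.
From Coquelicot Require Import Coquelicot.
Open Scope R_scope.

Definition in_K (a : nat -> R) : Prop :=
  (forall n, 0 <= a n) /\ 0 < a 0%nat /\
  (exists n, (0 < n)%nat /\ a n <> 0) /\
  Rbar_lt (Finite 0) (CV_radius a).

Definition fK (a : nat -> R) (t : R) : R := PSeries a t.

(* Khinchin family: P(X_t = n) = a_n t^n / f(t) *)
Definition probK (a : nat -> R) (t : R) (n : nat) : R := a n * t ^ n / fK a t.

Definition meanK (a : nat -> R) (t : R) : R :=
  Series (fun n => INR n * probK a t n).

Definition varK (a : nat -> R) (t : R) : R :=
  Series (fun n => (INR n - meanK a t) ^ 2 * probK a t n).
Definition sigmaK (a : nat -> R) (t : R) : R := sqrt (varK a t).

Definition norm_momentK (a : nat -> R) (k : nat) (t : R) : R :=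
  Series (fun n => ((INR n - meanK a t) / sigmaK a t) ^ k * probK a t n).

Definition fulcrum (a : nat -> R) (s : R) : R := ln (fK a (exp s)).

Definition Rbar_ln (r : Rbar) : Rbar :=
  match r with
  | Finite x => Finite (ln x)
  | p_infty => p_infty
  | m_infty => m_infty
  end.

Definition eventually_left (r : Rbar) (P : R -> Prop) : Prop :=
  exists x0 : R, Rbar_lt (Finite x0) r /\
    forall x, x0 < x -> Rbar_lt (Finite x) r -> P x.

Definition limsup_left_finite (r : Rbar) (g : R -> R) : Prop :=
  exists M : R, eventually_left r (fun x => g x <= M).

From Stdlib Require Import Reals Arith Lra Lia.
From Coquelicot Require Import Coquelicot.
Open Scope R_scope.

(* With [Q_k^c(s) = sum_n (n - c)^k a_n e^(ns) = f(e^s) E((X_(e^s) - c)^k)] one has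
   [Q_k^c' = Q_(k+1)^c + c Q_k^c] and [F' = Q_1^0 / Q_0^0].  Differentiating
   [Q_1^c = (F' - c) Q_0^c] repeatedly and applying Pascal's rule gives the moment-cumulant
   recursion [Q_(p+1)^c = sum_(i<=p) C(p,i) Q_i^c k_(p+1-i)^c], [k_j^c = F^(j) - c [j = 1]];
   solving it for its last term shows along the way that [F] is smooth.  At [c = m_f(e^s) = F'(s)]
   and after division by [f sigma^(p+1)], [sigma^2 = F''(s)], it becomes the triangular system
   [mu_0 = 1], [mu_(p+1) = sum_(i<=p) C(p,i) mu_i K_(p+1-i)] between the normalized moments
   [mu_k = E(breve X_(e^s)^k)] and [K_j = F^(j) / F''^(j/2)], where [K_1 = 0], [K_2 = 1].
   It expresses each of [mu_(p+1)], [K_(p+1)] polynomially through the other and lower-order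
   terms, so the [K_j] ([j <= n]) stay bounded as [s] increases to [ln R] iff the [mu_k]
   ([k <= n]) do; the substitution [t = e^s] turns this into the statement about [t]. *)

Lemma binomial_C_n_0 n : Binomial.C n 0 = 1.
Proof. unfold Binomial.C; rewrite Nat.sub_0_r; simpl; field; apply INR_fact_neq_0. Qed.

Lemma binomial_C_n_n n : Binomial.C n n = 1.
Proof. unfold Binomial.C; rewrite Nat.sub_diag; simpl; field; apply INR_fact_neq_0. Qed.

Lemma sum_n_lin (u v w : nat -> R) c n :
  sum_n u n + sum_n v n + c * sum_n w n = sum_n (fun i => u i + v i + c * w i) n.
Proof.
  induction n as [|n IHn]; [rewrite !sum_O; ring |].
  rewrite !sum_Sn, <- IHn. change plus with Rplus. ring.
Qed.

Lemma sum_n_Rmult_r (u : nat -> R) c n : sum_n u n * c = sum_n (fun i => u i * c) n.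
Proof. symmetry. exact (sum_n_mult_r c u n). Qed.

Lemma sum_n_Leibniz (A B : nat -> R) p :
  sum_n (fun i => Binomial.C p i * A (S i) * B (p - i)%nat) p
  + sum_n (fun i => Binomial.C p i * A i * B (S (p - i))) p
  = sum_n (fun i => Binomial.C (S p) i * A i * B (S p - i)%nat) (S p).
Proof.
  unfold sum_n.
  replace (sum_n_m (fun i => Binomial.C p i * A (S i) * B (p - i)%nat) 0 p)
    with (sum_n_m (fun k => Binomial.C p (pred k) * A k * B (S p - k)%nat) 1 (S p))
    by (rewrite <- sum_n_m_S; reflexivity).
  rewrite (sum_n_Sm _ 1 p), (sum_Sn_m _ 0 p), (sum_Sn_m _ 0 (S p)), (sum_n_Sm _ 1 p) by lia.
  rewrite (sum_n_m_ext_loc (fun i => Binomial.C (S p) i * A i * B (S p - i)%nat)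
             (fun i => plus (Binomial.C p (pred i) * A i * B (S p - i)%nat)
                            (Binomial.C p i * A i * B (S (p - i)))) 1 p).
  2:{ intros [|i] Hi; [lia|]. simpl pred. rewrite <- (pascal p i) by lia.
      replace (S (p - S i)) with (S p - S i)%nat by lia. unfold plus; simpl; ring. }
  rewrite sum_n_m_plus. unfold plus; simpl.
  rewrite !binomial_C_n_0, !binomial_C_n_n, Nat.sub_diag, Nat.sub_0_r. ring.
Qed.

Section EventuallyLeft.

Variable r : Rbar.

Lemma eventually_left_and (P Q : R -> Prop) :
  eventually_left r P -> eventually_left r Q -> eventually_left r (fun x => P x /\ Q x).
Proof.
  intros [x0 [Hx0 HP]] [x1 [Hx1 HQ]]. exists (Rmax x0 x1). split.
  - apply Rmax_case; assumption.
  - intros x Hx Hxr. split.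
    + apply HP; [apply Rle_lt_trans with (Rmax x0 x1); [apply Rmax_l|]|]; assumption.
    + apply HQ; [apply Rle_lt_trans with (Rmax x0 x1); [apply Rmax_r|]|]; assumption.
Qed.

Lemma eventually_left_impl (P Q : R -> Prop) :
  (forall x : R, Rbar_lt x r -> P x -> Q x) -> eventually_left r P -> eventually_left r Q.
Proof.
  intros HPQ [x0 [Hx0 HP]]. exists x0. split; [assumption|].
  intros x Hx Hxr. apply HPQ, HP; assumption.
Qed.

Lemma limsup_left_finite_ext (f g : R -> R) :
  (forall x : R, Rbar_lt x r -> f x = g x) -> limsup_left_finite r f -> limsup_left_finite r g.
Proof.
  intros Hfg [M HM]. exists M. revert HM. apply eventually_left_impl.
  intros x Hx. rewrite Hfg by assumption. trivial.
Qed.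

Definition bounded_left (g : R -> R) : Prop := limsup_left_finite r (fun x => Rabs (g x)).

Lemma bounded_left_ext (f g : R -> R) :
  (forall x : R, Rbar_lt x r -> f x = g x) -> bounded_left f -> bounded_left g.
Proof.
  intros Hfg. apply limsup_left_finite_ext. intros x Hx. rewrite Hfg by assumption. reflexivity.
Qed.

Lemma bounded_left_const (c : R) : Rbar_lt m_infty r -> bounded_left (fun _ => c).
Proof.
  intros Hr. exists (Rabs c).
  destruct r as [x| |]; [exists (x - 1) | exists 0 | contradiction]; simpl; split; intros; lra.
Qed.

Lemma bounded_left_plus (f g : R -> R) :
  bounded_left f -> bounded_left g -> bounded_left (fun x => f x + g x).
Proof.
  intros [Mf Hf] [Mg Hg]. exists (Mf + Mg).
  generalize (eventually_left_and _ _ Hf Hg). apply eventually_left_impl.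
  intros x _ [Hfx Hgx]. eapply Rle_trans; [apply Rabs_triang | lra].
Qed.

Lemma bounded_left_opp (f : R -> R) : bounded_left f -> bounded_left (fun x => - f x).
Proof.
  intros [M Hf]. exists M. revert Hf. apply eventually_left_impl.
  intros x _. rewrite Rabs_Ropp. trivial.
Qed.

Lemma bounded_left_mult (f g : R -> R) :
  bounded_left f -> bounded_left g -> bounded_left (fun x => f x * g x).
Proof.
  intros [Mf Hf] [Mg Hg]. exists (Mf * Mg).
  generalize (eventually_left_and _ _ Hf Hg). apply eventually_left_impl.
  intros x _ [Hfx Hgx]. rewrite Rabs_mult. apply Rmult_le_compat; auto using Rabs_pos.
Qed.

Lemma bounded_left_sum_n_m (f : nat -> R -> R) n m : Rbar_lt m_infty r ->
  (forall i, (n <= i <= m)%nat -> bounded_left (f i)) ->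
  bounded_left (fun x => sum_n_m (fun i => f i x) n m).
Proof.
  intros Hr Hf. induction m as [|m IHm].
  - destruct n.
    + apply (bounded_left_ext (f 0%nat)); [intros; now rewrite sum_n_n | apply Hf; lia].
    + apply (bounded_left_ext (fun _ => 0)); [intros; now rewrite sum_n_m_zero by lia |].
      now apply bounded_left_const.
  - destruct (Nat.le_gt_cases n (S m)) as [Hnm | Hmn].
    + apply (bounded_left_ext (fun x => sum_n_m (fun i => f i x) n m + f (S m) x)).
      { intros x _. now rewrite sum_n_Sm. }
      apply bounded_left_plus; [apply IHm | apply Hf]; intros; try apply Hf; lia.
    + apply (bounded_left_ext (fun _ => 0)); [intros; now rewrite sum_n_m_zero |].
      now apply bounded_left_const.
Qed.

End EventuallyLeft.

Section Triangular.

Variables (r : Rbar) (M K : nat -> R -> R).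
Hypothesis r_finite_below : Rbar_lt m_infty r.
Hypothesis M_0 : forall x : R, Rbar_lt x r -> M 0%nat x = 1.
Hypothesis M_S : forall p (x : R), Rbar_lt x r ->
  M (S p) x = sum_n (fun i => Binomial.C p i * M i x * K (S (p - i)) x) p.

Lemma K_S_eq p (x : R) : Rbar_lt x r ->
  K (S p) x = M (S p) x - sum_n_m (fun i => Binomial.C p i * M i x * K (S (p - i)) x) 1 p.
Proof.
  intros Hx. rewrite M_S by assumption. unfold sum_n. rewrite sum_Sn_m by lia.
  change plus with Rplus. rewrite binomial_C_n_0, M_0, Nat.sub_0_r by assumption. ring.
Qed.

Lemma bounded_left_moments n :
  (forall j, (1 <= j <= n)%nat -> bounded_left r (K j)) ->
  forall k, (k <= n)%nat -> bounded_left r (M k).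
Proof.
  intros HK k. induction k as [[|p] IH] using lt_wf_ind; intros Hk.
  - apply (bounded_left_ext r (fun _ => 1)); [intros x Hx; symmetry; apply M_0, Hx |].
    apply bounded_left_const, r_finite_below.
  - apply (bounded_left_ext r
             (fun x => sum_n_m (fun i => Binomial.C p i * M i x * K (S (p - i)) x) 0 p)).
    { intros x Hx. symmetry. apply M_S, Hx. }
    apply bounded_left_sum_n_m; [exact r_finite_below |]. intros i Hi.
    apply bounded_left_mult; [apply bounded_left_mult |].
    + apply bounded_left_const, r_finite_below.
    + apply IH; lia.
    + apply HK; lia.
Qed.

Lemma bounded_left_cumulants n :
  (forall k, (k <= n)%nat -> bounded_left r (M k)) ->
  forall j, (1 <= j <= n)%nat -> bounded_left r (K j).
Proof.
  intros HM j. induction j as [[|p] IH] using lt_wf_ind; intros Hj; [lia |].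
  apply (bounded_left_ext r (fun x => M (S p) x
           + - sum_n_m (fun i => Binomial.C p i * M i x * K (S (p - i)) x) 1 p)).
  { intros x Hx. symmetry. apply K_S_eq, Hx. }
  apply bounded_left_plus; [apply HM; lia |]. apply bounded_left_opp.
  apply bounded_left_sum_n_m; [exact r_finite_below |]. intros i Hi.
  apply bounded_left_mult; [apply bounded_left_mult |].
  - apply bounded_left_const, r_finite_below.
  - apply HM; lia.
  - apply IH; lia.
Qed.

End Triangular.

Lemma Rbar_lt_ln_iff (r : Rbar) (s : R) :
  Rbar_lt 0 r -> (Rbar_lt s (Rbar_ln r) <-> Rbar_lt (exp s) r).
Proof.
  destruct r as [r| |]; simpl; intros Hr; try tauto.
  rewrite <- (exp_ln r) at 2 by lra. split; [apply exp_increasing | apply exp_lt_inv].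
Qed.

Lemma Rbar_ln_finite_below (r : Rbar) : Rbar_lt 0 r -> Rbar_lt m_infty (Rbar_ln r).
Proof. destruct r; simpl; tauto. Qed.

Lemma eventually_left_exp (r : Rbar) (P : R -> Prop) : Rbar_lt 0 r ->
  eventually_left r P <-> eventually_left (Rbar_ln r) (fun s => P (exp s)).
Proof.
  intros Hr. split.
  - intros [x0 [Hx0 HP]].
    assert (Ht : exists t, 0 < t /\ Rbar_lt t r).
    { destruct r as [r| |]; simpl in Hr |- *; [exists (r / 2) | exists 1 | contradiction]; lra. }
    destruct Ht as [t [Ht Htr]].
    assert (Hx1 : 0 < Rmax x0 t) by (apply Rlt_le_trans with t; [assumption | apply Rmax_r]).
    exists (ln (Rmax x0 t)). split.
    + apply Rbar_lt_ln_iff; [assumption |]. rewrite exp_ln by assumption.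
      apply Rmax_case; assumption.
    + intros s Hs Hsr. apply HP.
      * apply Rle_lt_trans with (Rmax x0 t); [apply Rmax_l |].
        rewrite <- (exp_ln (Rmax x0 t)) by assumption. apply exp_increasing, Hs.
      * apply Rbar_lt_ln_iff; assumption.
  - intros [s0 [Hs0 HP]]. exists (exp s0). split; [apply Rbar_lt_ln_iff; assumption |].
    intros t Ht Htr.
    assert (Htpos : 0 < t) by (apply Rlt_trans with (exp s0); [apply exp_pos | assumption]).
    rewrite <- (exp_ln t) by assumption. apply HP.
    + rewrite <- (ln_exp s0). apply ln_increasing; [apply exp_pos | assumption].
    + apply Rbar_lt_ln_iff; [| rewrite exp_ln]; assumption.
Qed.

Lemma limsup_left_finite_exp (r : Rbar) (g : R -> R) : Rbar_lt 0 r ->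
  limsup_left_finite r g <-> limsup_left_finite (Rbar_ln r) (fun s => g (exp s)).
Proof.
  intros Hr. split; intros [M HM]; exists M;
    apply (eventually_left_exp r (fun x => g x <= M) Hr); assumption.
Qed.

Lemma Series_ge_term (u : nat -> R) N :
  ex_series u -> (forall n, 0 <= u n) -> u N <= Series u.
Proof.
  intros Hu Hpos. rewrite (Series_incr_n u (S N)) by (lia || assumption). simpl pred.
  assert (Htail : 0 <= Series (fun k => u (S N + k)%nat)).
  { replace 0 with (Series (fun _ : nat => 0 * 0)) at 1 by (rewrite Series_scal_l; ring).
    apply Series_le.
    - intros k. rewrite Rmult_0_l. split; [lra | apply Hpos].
    - apply (ex_series_incr_n u (S N)) in Hu. exact Hu. }
  destruct N as [|N]; simpl in *; [lra|].
  assert (0 <= sum_f_R0 u N) by (apply cond_pos_sum; assumption). lra.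
Qed.

Section PowerSeries.

Variable a : nat -> R.

Definition centered_coef (c : R) (k n : nat) : R := (INR n - c) ^ k * a n.

(* [raw_moment c k s = f(e^s) E((X_(e^s) - c)^k)]. *)
Definition raw_moment (c : R) (k : nat) (s : R) : R := PSeries (centered_coef c k) (exp s).

Definition fulcrum_domain (s : R) : Prop := Rbar_lt s (Rbar_ln (CV_radius a)).

Lemma centered_coef_S c k n :
  centered_coef c (S k) n + c * centered_coef c k n
  = PS_incr_1 (PS_derive (centered_coef c k)) n.
Proof.
  unfold PS_incr_1, PS_derive, centered_coef.
  destruct n as [|n]; [change zero with 0 |]; rewrite ?S_INR; simpl; ring.
Qed.

Lemma CV_radius_centered_coef c k :
  Rbar_le (CV_radius a) (CV_radius (centered_coef c k)).
Proof.
  induction k as [|k IHk].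
  - rewrite (CV_radius_ext (centered_coef c 0) a); [apply Rbar_le_refl |].
    intros n. unfold centered_coef. simpl. ring.
  - rewrite (CV_radius_ext (centered_coef c (S k))
               (PS_plus (PS_incr_1 (PS_derive (centered_coef c k)))
                        (PS_scal (- c) (centered_coef c k)))).
    2:{ intros n. unfold PS_plus, PS_scal. rewrite <- centered_coef_S.
        change plus with Rplus. change scal with Rmult. ring. }
    eapply Rbar_le_trans; [| apply CV_radius_plus].
    apply Rbar_min_case_strong; intros _.
    + rewrite CV_radius_incr_1, CV_radius_derive. exact IHk.
    + destruct (Req_dec c 0) as [-> | Hc].
      * rewrite (CV_radius_ext (PS_scal (- 0) (centered_coef 0 k)) (fun _ => 0)),
          CV_radius_const_0;
          [destruct (CV_radius a); exact I |].
        intros n. unfold PS_scal. change scal with Rmult. ring.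
      * rewrite CV_radius_scal; [exact IHk | lra].
Qed.

Hypothesis radius_pos : Rbar_lt 0 (CV_radius a).

Lemma fulcrum_domain_radius c k s : fulcrum_domain s ->
  Rbar_lt (Rabs (exp s)) (CV_radius (centered_coef c k)).
Proof.
  intros Hs. rewrite Rabs_pos_eq by (left; apply exp_pos).
  apply (Rbar_lt_le_trans _ (CV_radius a)); [| apply CV_radius_centered_coef].
  apply Rbar_lt_ln_iff; assumption.
Qed.

Lemma fulcrum_domain_locally s : fulcrum_domain s -> locally s fulcrum_domain.
Proof. apply open_Rbar_lt. Qed.

Lemma ex_series_centered_coef c k s : fulcrum_domain s ->
  ex_series (fun n => centered_coef c k n * exp s ^ n).
Proof. intros Hs. apply ex_series_Rabs, CV_disk_inside, fulcrum_domain_radius, Hs. Qed.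

Lemma PSeries_centered_coef_lin c k c' k' d s : fulcrum_domain s ->
  PSeries (fun n => centered_coef c k n + d * centered_coef c' k' n) (exp s)
  = raw_moment c k s + d * raw_moment c' k' s.
Proof.
  intros Hs. unfold raw_moment. rewrite <- PSeries_scal, <- PSeries_plus.
  - apply PSeries_ext. reflexivity.
  - apply CV_radius_inside, fulcrum_domain_radius, Hs.
  - apply ex_pseries_scal; [apply Rmult_comm |].
    apply CV_radius_inside, fulcrum_domain_radius, Hs.
Qed.

Lemma is_derive_raw_moment c k s : fulcrum_domain s ->
  is_derive (raw_moment c k) s (raw_moment c (S k) s + c * raw_moment c k s).
Proof.
  intros Hs. unfold raw_moment at 1.
  rewrite <- PSeries_centered_coef_lin, (PSeries_ext _ _ _ (centered_coef_S c k)),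
    PSeries_incr_1 by assumption.
  exact (is_derive_comp (PSeries (centered_coef c k)) exp s _ _
           (is_derive_PSeries _ _ (fulcrum_domain_radius c k s Hs)) (is_derive_exp s)).
Qed.

Lemma raw_moment_0 c s : raw_moment c 0 s = fK a (exp s).
Proof. apply PSeries_ext. intros n. unfold centered_coef. simpl. ring. Qed.

Lemma raw_moment_1 c s : fulcrum_domain s ->
  raw_moment c 1 s = raw_moment 0 1 s + - c * raw_moment 0 0 s.
Proof.
  intros Hs. rewrite <- PSeries_centered_coef_lin by assumption.
  apply PSeries_ext. intros n. unfold centered_coef. simpl. ring.
Qed.

End PowerSeries.

Section Fulcrum.

Variable a : nat -> R.
Hypothesis a_in_K : in_K a.

Let radius_pos : Rbar_lt 0 (CV_radius a) := proj2 (proj2 (proj2 a_in_K)).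

Lemma raw_moment_0_pos c s : fulcrum_domain a s -> 0 < raw_moment a c 0 s.
Proof.
  pose proof a_in_K as [a_ge0 [a0_pos _]]. intros Hs.
  apply Rlt_le_trans with (centered_coef a c 0 0 * exp s ^ 0).
  - unfold centered_coef. simpl. lra.
  - apply (Series_ge_term (fun n => centered_coef a c 0 n * exp s ^ n));
      [apply ex_series_centered_coef; assumption |].
    intros n. unfold centered_coef. simpl.
    apply Rmult_le_pos; [specialize (a_ge0 n); lra | apply pow_le; left; apply exp_pos].
Qed.

Lemma fK_exp_pos s : fulcrum_domain a s -> 0 < fK a (exp s).
Proof. intros Hs. rewrite <- (raw_moment_0 a 0). apply raw_moment_0_pos, Hs. Qed.

Lemma raw_moment_2_pos c s : fulcrum_domain a s -> 0 < raw_moment a c 2 s.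
Proof.
  pose proof a_in_K as [a_ge0 [a0_pos [[N [HN HaN]] _]]]. intros Hs.
  assert (Hterm : forall n, 0 <= centered_coef a c 2 n * exp s ^ n).
  { intros n. unfold centered_coef.
    apply Rmult_le_pos; [apply Rmult_le_pos; [apply pow2_ge_0 | apply a_ge0] |].
    apply pow_le. left. apply exp_pos. }
  (* Either [c <> 0] and the term [n = 0] is positive, or [c = 0] and the term [n = N] is. *)
  set (n0 := if Req_EM_T c 0 then N else 0%nat).
  apply Rlt_le_trans with (centered_coef a c 2 n0 * exp s ^ n0);
    [| apply (Series_ge_term (fun n => centered_coef a c 2 n * exp s ^ n));
       [apply ex_series_centered_coef |]; assumption].
  apply Rmult_lt_0_compat; [| apply pow_lt, exp_pos].
  unfold n0, centered_coef. destruct (Req_EM_T c 0) as [-> | Hc].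
  - rewrite Rminus_0_r. apply Rmult_lt_0_compat; [apply pow_lt, lt_0_INR; lia |].
    destruct (a_ge0 N); [assumption | congruence].
  - replace ((INR 0 - c) ^ 2) with (Rsqr c) by (unfold Rsqr; simpl; ring).
    apply Rmult_lt_0_compat; [apply Rsqr_pos_lt, Hc | exact a0_pos].
Qed.

Lemma is_derive_fulcrum s : fulcrum_domain a s ->
  is_derive (fulcrum a) s (raw_moment a 0 1 s / raw_moment a 0 0 s).
Proof.
  intros Hs. apply (is_derive_ext (fun x => ln (raw_moment a 0 0 x))).
  { intros x. unfold fulcrum. rewrite raw_moment_0. reflexivity. }
  replace (raw_moment a 0 1 s / raw_moment a 0 0 s)
    with ((raw_moment a 0 1 s + 0 * raw_moment a 0 0 s) * / raw_moment a 0 0 s)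
    by (unfold Rdiv; ring).
  exact (is_derive_comp ln (raw_moment a 0 0) s _ _ (is_derive_ln _ (raw_moment_0_pos 0 s Hs))
           (is_derive_raw_moment a radius_pos 0 0 s Hs)).
Qed.

(* The [j]-th cumulant of [X_(e^s) - c]. *)
Definition cumulant (c : R) (j : nat) (s : R) : R :=
  Derive_n (fulcrum a) j s - match j with 1%nat => c | _ => 0 end.

Lemma cumulant_0 j s : cumulant 0 j s = Derive_n (fulcrum a) j s.
Proof. unfold cumulant. destruct j as [|[|j]]; ring. Qed.

Lemma is_derive_cumulant c j s : ex_derive (Derive_n (fulcrum a) (S j)) s ->
  is_derive (cumulant c (S j)) s (cumulant c (S (S j)) s).
Proof.
  intros Hd. unfold cumulant.
  apply (is_derive_minus (Derive_n (fulcrum a) (S j))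
                         (fun _ => match S j with 1%nat => c | _ => 0 end)).
  - apply Derive_correct, Hd.
  - exact (is_derive_const _ s).
Qed.

Definition moment_recursion (p : nat) : Prop :=
  forall c s, fulcrum_domain a s ->
  raw_moment a c (S p) s
  = sum_n (fun i => Binomial.C p i * raw_moment a c i s * cumulant c (S (p - i)) s) p.

Definition fulcrum_derivable (j : nat) : Prop :=
  forall s, fulcrum_domain a s -> ex_derive (Derive_n (fulcrum a) j) s.

Lemma moment_recursion_0 : moment_recursion 0.
Proof.
  intros c s Hs. unfold sum_n. rewrite sum_n_n, binomial_C_n_0.
  change (cumulant c (S (0 - 0)) s) with (Derive (fulcrum a) s - c).
  rewrite (is_derive_unique _ _ _ (is_derive_fulcrum s Hs)), raw_moment_1, !raw_moment_0
    by assumption.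
  assert (H0 := fK_exp_pos s Hs). field. lra.
Qed.

Lemma fulcrum_derivable_S p : moment_recursion p ->
  (forall j, (1 <= j <= p)%nat -> fulcrum_derivable j) -> fulcrum_derivable (S p).
Proof.
  intros HR HD s Hs.
  set (g := fun i x => Binomial.C p i * raw_moment a 0 i x * cumulant 0 (S (p - i)) x).
  (* Solve the recursion at [c = 0] for its [i = 0] term [f(e^s) F^(p+1)(s)]. *)
  apply (ex_derive_ext_loc
           (fun x => (raw_moment a 0 (S p) x - sum_n_m (fun i => g i x) 1 p) / raw_moment a 0 0 x)).
  - apply (filter_imp (fulcrum_domain a)); [| apply fulcrum_domain_locally, Hs].
    intros x Hx. rewrite (HR 0 x Hx). unfold sum_n. rewrite sum_Sn_m by lia. change plus with Rplus.
    unfold g. rewrite binomial_C_n_0, Nat.sub_0_r, cumulant_0.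
    assert (H0 := raw_moment_0_pos 0 x Hx).
    (* [field] only recognizes equations stated at type [R], not at Coquelicot's carrier. *)
    match goal with |- ?l = ?r => change (@eq R l r) end. field. lra.
  - apply ex_derive_div.
    + apply (ex_derive_minus (raw_moment a 0 (S p)) (fun x => sum_n_m (fun i => g i x) 1 p)).
      * eexists. apply is_derive_raw_moment; assumption.
      * apply (ex_derive_n_sum_n_m 1 p g 1 s).
        apply (filter_imp (fulcrum_domain a)); [| apply fulcrum_domain_locally, Hs].
        intros x Hx l [|[|j]] Hl Hj; [exact I | | lia]. unfold g.
        apply ex_derive_mult; [apply ex_derive_scal |].
        -- eexists. apply is_derive_raw_moment; assumption.
        -- eexists. apply is_derive_cumulant, HD; [lia | assumption].
    + eexists. apply is_derive_raw_moment; assumption.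
    + apply Rgt_not_eq, raw_moment_0_pos, Hs.
Qed.

Lemma moment_recursion_S p : moment_recursion p ->
  (forall j, (1 <= j <= S p)%nat -> fulcrum_derivable j) -> moment_recursion (S p).
Proof.
  intros HR HD c s Hs.
  set (g := fun i x => Binomial.C p i * raw_moment a c i x * cumulant c (S (p - i)) x).
  set (dg := fun i =>
    Binomial.C p i * raw_moment a c (S i) s * cumulant c (S (p - i)) s
    + Binomial.C p i * raw_moment a c i s * cumulant c (S (S (p - i))) s + c * g i s).
  assert (Hsum : is_derive (fun x => sum_n (fun i => g i x) p) s (sum_n dg p)).
  { apply (is_derive_sum_n g). intros i Hi.
    replace (dg i) with
      (Binomial.C p i * (raw_moment a c (S i) s + c * raw_moment a c i s) * cumulant c (S (p - i)) s
       + Binomial.C p i * raw_moment a c i s * cumulant c (S (S (p - i))) s)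
      by (unfold dg, g; ring).
    apply (Derive.is_derive_mult (fun x => Binomial.C p i * raw_moment a c i x) (cumulant c _)).
    - apply is_derive_scal, is_derive_raw_moment; assumption.
    - apply is_derive_cumulant, HD; [lia | assumption]. }
  assert (Hraw : is_derive (raw_moment a c (S p)) s (sum_n dg p)).
  { apply (is_derive_ext_loc (fun x => sum_n (fun i => g i x) p)); [| exact Hsum].
    apply (filter_imp (fulcrum_domain a)); [| apply fulcrum_domain_locally, Hs].
    intros x Hx. symmetry. apply HR, Hx. }
  assert (Hderiv := is_derive_unique _ _ _ (is_derive_raw_moment a radius_pos c (S p) s Hs)).
  rewrite (is_derive_unique _ _ _ Hraw) in Hderiv. unfold dg in Hderiv.
  rewrite <- sum_n_lin in Hderiv.
  replace (sum_n (fun i => g i s) p) with (raw_moment a c (S p) s) in Hderiv by (apply HR, Hs).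
  rewrite <- (sum_n_Leibniz (fun i => raw_moment a c i s) (fun j => cumulant c (S j) s)).
  cbv beta. lra.
Qed.

Lemma moment_recursion_all p :
  moment_recursion p /\ forall j, (1 <= j <= p)%nat -> fulcrum_derivable j.
Proof.
  induction p as [|p [HR HD]].
  - split; [apply moment_recursion_0 | intros; lia].
  - assert (HD' : forall j, (1 <= j <= S p)%nat -> fulcrum_derivable j).
    { intros j Hj. destruct (Nat.eq_dec j (S p)) as [-> | Hne].
      - apply fulcrum_derivable_S; assumption.
      - apply HD. lia. }
    split; [apply moment_recursion_S |]; assumption.
Qed.

Lemma Series_centered_probK c k s :
  Series (fun n => (INR n - c) ^ k * probK a (exp s) n) = raw_moment a c k s / fK a (exp s).
Proof.
  unfold probK, raw_moment, PSeries, Rdiv. rewrite <- Series_scal_r.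
  apply Series_ext. intros n. unfold centered_coef. ring.
Qed.

Lemma meanK_exp s : fulcrum_domain a s -> meanK a (exp s) = Derive_n (fulcrum a) 1 s.
Proof.
  intros Hs. unfold meanK.
  rewrite (Series_ext _ (fun n => (INR n - 0) ^ 1 * probK a (exp s) n)) by (intros; ring).
  rewrite Series_centered_probK, <- (raw_moment_0 a 0).
  symmetry. apply is_derive_unique, is_derive_fulcrum, Hs.
Qed.

Lemma cumulant_meanK_1 s : fulcrum_domain a s -> cumulant (meanK a (exp s)) 1 s = 0.
Proof. intros Hs. unfold cumulant. rewrite meanK_exp by assumption. ring. Qed.

Lemma varK_exp s : fulcrum_domain a s -> varK a (exp s) = Derive_n (fulcrum a) 2 s.
Proof.
  intros Hs. unfold varK. rewrite Series_centered_probK.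
  rewrite (proj1 (moment_recursion_all 1) _ s Hs), sum_Sn, sum_O. change plus with Rplus.
  cbn [Nat.sub].
  rewrite binomial_C_n_0, binomial_C_n_n, cumulant_meanK_1, raw_moment_0 by assumption.
  unfold cumulant. assert (Hf := fK_exp_pos s Hs). field. lra.
Qed.

Lemma varK_exp_pos s : fulcrum_domain a s -> 0 < varK a (exp s).
Proof.
  intros Hs. unfold varK. rewrite Series_centered_probK.
  apply Rdiv_lt_0_compat; [apply raw_moment_2_pos | apply fK_exp_pos]; assumption.
Qed.

Lemma sigmaK_exp_pos s : fulcrum_domain a s -> 0 < sigmaK a (exp s).
Proof. intros Hs. apply sqrt_lt_R0, varK_exp_pos, Hs. Qed.

Lemma sigmaK_exp_sqr s : fulcrum_domain a s -> sigmaK a (exp s) ^ 2 = Derive_n (fulcrum a) 2 s.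
Proof.
  intros Hs. unfold sigmaK. rewrite <- varK_exp by assumption.
  apply pow2_sqrt. left. apply varK_exp_pos, Hs.
Qed.

Definition normalized_moment (k : nat) (s : R) : R := norm_momentK a k (exp s).

Definition normalized_cumulant (j : nat) (s : R) : R :=
  cumulant (meanK a (exp s)) j s / sigmaK a (exp s) ^ j.

Lemma normalized_moment_eq k s : fulcrum_domain a s ->
  normalized_moment k s
  = raw_moment a (meanK a (exp s)) k s / (fK a (exp s) * sigmaK a (exp s) ^ k).
Proof.
  intros Hs. assert (Hsigma := sigmaK_exp_pos s Hs). assert (Hf := fK_exp_pos s Hs).
  unfold normalized_moment, norm_momentK.
  rewrite (Series_ext _ (fun n => (INR n - meanK a (exp s)) ^ k * probK a (exp s) n
                                  * / sigmaK a (exp s) ^ k)).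
  - rewrite Series_scal_r, Series_centered_probK. field. split; [apply pow_nonzero |]; lra.
  - intros n. unfold Rdiv. rewrite Rpow_mult_distr, pow_inv. ring.
Qed.

Lemma normalized_moment_0 s : fulcrum_domain a s -> normalized_moment 0 s = 1.
Proof.
  intros Hs. rewrite normalized_moment_eq, raw_moment_0 by assumption.
  assert (Hf := fK_exp_pos s Hs). simpl. field. lra.
Qed.

Lemma normalized_moment_S p s : fulcrum_domain a s ->
  normalized_moment (S p) s
  = sum_n (fun i => Binomial.C p i * normalized_moment i s * normalized_cumulant (S (p - i)) s) p.
Proof.
  intros Hs. assert (Hsigma := sigmaK_exp_pos s Hs). assert (Hf := fK_exp_pos s Hs).
  assert (Hterm : forall i, (i <= p)%nat ->
    Binomial.C p i * raw_moment a (meanK a (exp s)) i s * cumulant (meanK a (exp s)) (S (p - i)) s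
      * / (fK a (exp s) * sigmaK a (exp s) ^ S p)
    = Binomial.C p i * normalized_moment i s * normalized_cumulant (S (p - i)) s).
  { intros i Hi. rewrite normalized_moment_eq by assumption. unfold normalized_cumulant.
    replace (sigmaK a (exp s) ^ S p) with (sigmaK a (exp s) ^ i * sigmaK a (exp s) ^ S (p - i))
      by (rewrite <- pow_add; f_equal; lia).
    field. repeat split; try apply pow_nonzero; lra. }
  rewrite normalized_moment_eq, (proj1 (moment_recursion_all p) _ s Hs) by assumption.
  unfold Rdiv. rewrite sum_n_Rmult_r. apply sum_n_ext_loc, Hterm.
Qed.

Lemma normalized_cumulant_1 s : fulcrum_domain a s -> normalized_cumulant 1 s = 0.
Proof.
  intros Hs. unfold normalized_cumulant. rewrite cumulant_meanK_1 by assumption. unfold Rdiv. ring.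
Qed.

Lemma normalized_cumulant_2 s : fulcrum_domain a s -> normalized_cumulant 2 s = 1.
Proof.
  intros Hs. unfold normalized_cumulant, cumulant. rewrite sigmaK_exp_sqr by assumption.
  assert (H2 := varK_exp_pos s Hs). rewrite varK_exp in H2 by assumption. field. lra.
Qed.

Lemma fulcrum_ratio_normalized_cumulant j s : fulcrum_domain a s -> (2 <= j)%nat ->
  Rabs (Derive_n (fulcrum a) j s) / Rpower (Derive_n (fulcrum a) 2 s) (INR j / 2)
  = Rabs (normalized_cumulant j s).
Proof.
  intros Hs Hj. assert (Hsigma := sigmaK_exp_pos s Hs). assert (Hvar := varK_exp_pos s Hs).
  rewrite <- varK_exp by assumption.
  replace (INR j / 2) with (/ 2 * INR j) by (unfold Rdiv; ring).
  rewrite <- Rpower_mult, Rpower_sqrt, Rpower_pow by (try apply sqrt_lt_R0; assumption).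
  change (sqrt (varK a (exp s))) with (sigmaK a (exp s)).
  unfold normalized_cumulant, cumulant. destruct j as [|[|j]]; [lia | lia |].
  unfold Rdiv.
  rewrite Rminus_0_r, Rabs_mult, Rabs_inv, (Rabs_pos_eq (_ ^ _)) by (apply pow_le; lra).
  reflexivity.
Qed.

Lemma bounded_left_normalized_cumulant_le_2 j : (1 <= j <= 2)%nat ->
  bounded_left (Rbar_ln (CV_radius a)) (normalized_cumulant j).
Proof.
  intros Hj. destruct (Nat.eq_dec j 1) as [-> | Hj1].
  - apply (bounded_left_ext _ (fun _ => 0));
      [| apply bounded_left_const, Rbar_ln_finite_below, radius_pos].
    intros s Hs. symmetry. apply normalized_cumulant_1, Hs.
  - replace j with 2%nat by lia.
    apply (bounded_left_ext _ (fun _ => 1));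
      [| apply bounded_left_const, Rbar_ln_finite_below, radius_pos].
    intros s Hs. symmetry. apply normalized_cumulant_2, Hs.
Qed.

Lemma limsup_fulcrum_ratio_iff j : (2 <= j)%nat ->
  limsup_left_finite (Rbar_ln (CV_radius a))
    (fun s => Rabs (Derive_n (fulcrum a) j s) / Rpower (Derive_n (fulcrum a) 2 s) (INR j / 2))
  <-> bounded_left (Rbar_ln (CV_radius a)) (normalized_cumulant j).
Proof.
  intros Hj. split; apply limsup_left_finite_ext; intros s Hs;
    [| symmetry]; apply fulcrum_ratio_normalized_cumulant; assumption.
Qed.

Lemma limsup_norm_momentK_iff k :
  limsup_left_finite (CV_radius a) (fun t => Rabs (norm_momentK a k t))
  <-> bounded_left (Rbar_ln (CV_radius a)) (normalized_moment k).
Proof. exact (limsup_left_finite_exp _ _ radius_pos). Qed.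

End Fulcrum.

Theorem lemma3p2 (a : nat -> R) (Ha : in_K a) (n : nat) (Hn : (3 <= n)%nat) :
  (forall j : nat, (3 <= j <= n)%nat ->
     limsup_left_finite (Rbar_ln (CV_radius a))
       (fun s => Rabs (Derive_n (fulcrum a) j s)
                 / Rpower (Derive_n (fulcrum a) 2 s) (INR j / 2)))
  <->
  (forall k : nat, (3 <= k <= n)%nat ->
     limsup_left_finite (CV_radius a)
       (fun t => Rabs (norm_momentK a k t))).
Proof.
  pose proof Ha as (_ & _ & _ & radius_pos).
  pose proof (Rbar_ln_finite_below _ radius_pos) as Hr.
  pose proof (normalized_moment_0 a Ha) as M_0.
  pose proof (normalized_moment_S a Ha) as M_S.
  split.
  - intros HF k Hk. apply (limsup_norm_momentK_iff a Ha).
    apply (bounded_left_moments _ _ _ Hr M_0 M_S n); [| lia]. intros j Hj.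
    destruct (Nat.le_gt_cases j 2).
    + apply bounded_left_normalized_cumulant_le_2; [exact Ha | lia].
    + apply (limsup_fulcrum_ratio_iff a Ha); [lia |]. apply HF. lia.
  - intros HM j Hj. apply (limsup_fulcrum_ratio_iff a Ha); [lia |].
    apply (bounded_left_cumulants _ _ _ Hr M_0 M_S n); [| lia]. intros k Hk.
    destruct (Nat.le_gt_cases k 2).
    + apply (bounded_left_moments _ _ _ Hr M_0 M_S 2); [| lia]. intros i Hi.
      apply bounded_left_normalized_cumulant_le_2; [exact Ha | lia].
    + apply (limsup_norm_momentK_iff a Ha). apply HM. lia.
Qed.
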